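(* Let $\mu\in(0,1)$ and $\beta(a)=\frac{\mu}{1+a}$. Let $W(\tau,b)=C(\tau)(1-b)^{\mu-1}(1+e^{\tau}b)^{-\mu}$ for $\tau\ge0$, $b\in[0,1)$, with $C(\tau)>0$ such that $\int_0^1W(\tau,b)db=1$, let $\delta(\tau)=\frac{C'(\tau)}{C(\tau)^2}-\frac{\mu}{C(\tau)}$, $c(\tau)=e^{-\mu\tau}C(\tau)$, and $c_\infty=\lim_{\tau\to\infty}c(\tau)$ (which exists since $c$ is decreasing). Then for all $\tau\ge0$, $$-4e^{-(1-\mu)\tau}\le C(\tau)\delta(\tau)\le-\frac{c_\infty}{1+e^{-\tau}}e^{-(1-\mu)\tau}\le0.$$ *)

From HB Require Import structures.
From mathcomp Require Import all_boot all_order all_algebra.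
From mathcomp Require Import all_classical all_reals all_analysis.
Set Implicit Arguments. Unset Strict Implicit. Unset Printing Implicit Defensive.
Import Order.TTheory GRing.Theory Num.Theory.
Import numFieldNormedType.Exports.
Local Open Scope classical_set_scope.
Local Open Scope ring_scope.

Definition Wraw {R : realType} (mu tau b : R) : R :=
  (1 - b) `^ (mu - 1) * (1 + expR tau * b) `^ (- mu).

Definition Wmass {R : realType} (mu tau : R) : R :=
  fine (\int[@lebesgue_measure R]_(b in `[0%R, 1%R[) (Wraw mu tau b)%:E)%E.

Definition Cnorm {R : realType} (mu tau : R) : R := (Wmass mu tau)^-1.

Definition delta {R : realType} (mu tau : R) : R :=
  derive1 (Cnorm mu) tau / (Cnorm mu tau) ^+ 2 - mu / Cnorm mu tau.

Definition csmall {R : realType} (mu tau : R) : R := expR (- (mu * tau)) * Cnorm mu tau.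

From HB Require Import structures.
From mathcomp Require Import all_boot all_order all_algebra.
From mathcomp Require Import all_classical all_reals all_analysis.
From mathcomp Require Import measurable_realfun ring lra.
Set Implicit Arguments. Unset Strict Implicit. Unset Printing Implicit Defensive.
Import Order.TTheory GRing.Theory Num.Theory.
Import numFieldNormedType.Exports.
Local Open Scope classical_set_scope.
Local Open Scope ring_scope.

(* Write K(s) = \int_{-oo}^s e^{mu u} / (1 + e^u) du.  The change of variables
   u = zeta_tau(b) = tau + ln(1 - b) - ln(1 + e^tau b), which maps [0, 1)
   decreasingly onto (-oo, tau], gives
   d/db [- e^{-mu tau} K(zeta_tau(b))] = (1 - b)^{mu-1} (1 + e^tau b)^{-mu},
   hence \int_0^1 Wraw(tau, b) db = e^{-mu tau} K(tau), C(tau) = e^{mu tau} / K(tau)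
   and c(tau) = 1 / K(tau).  Since K is positive and increasing, c is positive and
   nonincreasing, so c_oo exists and 0 <= c_oo <= c(tau).  Differentiating C gives
   C(tau) delta(tau) = - e^{-(1-mu) tau} c(tau) / (1 + e^{-tau}), and both bounds
   follow from c_oo <= c(tau) <= 1 / K(0) <= 2. *)

Section improper_FTC2.
Context {R : realType}.
Notation mu := (@lebesgue_measure R).

Lemma ge0_continuous_FTC2_itvco (f F : R -> R) (a b l : R) : a < b ->
    (forall x, a <= x < b -> 0 <= f x) ->
    (forall x, a <= x < b -> {for x, continuous f}) ->
    (forall x, a <= x < b -> is_derive x 1 F (f x)) ->
    F x @[x --> b^'-] --> l ->
  (\int[mu]_(x in `[a, b[) (f x)%:E = (l - F a)%:E)%E.
Proof.
move=> ab f_ge0 cf dF Fl.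
pose c n := b - n.+1%:R^-1.
have c_lt_b n : c n < b by rewrite ltrBlDr ltrDl invr_gt0 ltr0n.
have in_ab n x : a <= x <= c n -> a <= x < b.
  by move=> /andP[ax xc]; rewrite ax (le_lt_trans xc).
pose A n : set R := `[a, c n]%classic.
have ndA : nondecreasing_seq A.
  apply/nondecreasing_seqP => n; apply/subsetPset; apply: subset_itvl.
  by rewrite bnd_simp lerB// lef_pV2 ?posrE// ler_nat.
have mA n : measurable (A n) by exact: measurable_itv.
have cfA n : {within A n, continuous f}.
  apply: continuous_in_subspaceT => x; rewrite inE /A/= in_itv/= => /in_ab.
  exact: cf.
have mf n : measurable_fun (A n) f by exact: subspace_continuous_measurable_fun.
have f_ge0A n x : A n x -> (0 <= (EFin \o f) x)%E.
  by rewrite /A/= in_itv/= lee_fin => /in_ab; exact: f_ge0.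
have := @ge0_nondecreasing_set_cvg_integral _ (measurableTypeR R) R A (EFin \o f)
  mu ndA mA (fun n => (measurable_EFinP _ _).2 (mf n)) f_ge0A.
rewrite -(itv_bnd_open_bigcup true a b) => intA.
apply: (cvg_unique _ intA); first exact: ereal_hausdorff.
have c_cvg : c n @[n --> \oo] --> b.
  rewrite -[X in _ --> X]subr0; apply: cvgB; [exact: cvg_cst | exact: cvg_harmonic].
have Fc_cvg : F (c n) @[n --> \oo] --> l by move/cvg_at_leftP : Fl; apply; split.
apply: cvg_trans (_ : (F (c n) - F a)%:E @[n --> \oo] --> (l - F a)%:E); last first.
  by apply: cvg_EFin; [exact: nearW | exact: cvgB Fc_cvg (cvg_cst _)].
apply: near_eq_cvg; near=> n.
have a_lt_c : a < c n by near: n; exact: cvgr_gt c_cvg _ ab.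
have dFc x : a <= x <= c n -> is_derive x 1 F (f x) by move/in_ab; exact: dF.
rewrite /= (@continuous_FTC2 _ f F) ?EFinB//.
- exact: cfA.
- split.
  + move=> x; rewrite in_itv/= => /andP[ax xc].
    by apply: ex_derive; apply: dFc; rewrite !ltW.
  + apply/cvg_at_right_filter/differentiable_continuous/derivable1_diffP.
    by apply: ex_derive; apply: dFc; rewrite lexx ltW.
  + apply/cvg_at_left_filter/differentiable_continuous/derivable1_diffP.
    by apply: ex_derive; apply: dFc; rewrite lexx ltW.
- move=> x; rewrite in_itv/= => /andP[ax xc].
  by rewrite derive1E; apply: derive_val; apply: dFc; rewrite !ltW.
Unshelve. all: by end_near. Qed.

End improper_FTC2.

Lemma powR_continuous {R : realType} (p x : R) : 0 < x ->
  {for x, continuous (fun y => y `^ p)}.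
Proof.
move=> x_gt0; apply/differentiable_continuous/derivable1_diffP.
by have [] := is_derive1_powR p x_gt0.
Qed.

Lemma continuous_comp_powR {R : realType} (g : R -> R) (p x : R) :
  {for x, continuous g} -> 0 < g x -> {for x, continuous (fun y => g y `^ p)}.
Proof.
move=> gx gx_gt0.
exact: (@continuous_comp _ _ _ g (fun y => y `^ p) x gx (powR_continuous gx_gt0)).
Qed.

Lemma is_derive_expRM {R : realType} (m s : R) :
  is_derive s 1 (fun u => expR (m * u)) (expR (m * s) * m).
Proof.
apply: (@is_derive1_comp _ expR (fun u => m * u)).
have := is_deriveZ m (is_derive_id s 1).
by move/is_derive_eq; apply; rewrite /GRing.scale/= mulr1.
Qed.

Lemma nonincreasing_is_cvgr {R : realType} (f : R -> R) (b : R) :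
  nonincreasing_fun f -> (forall x, b <= f x) -> cvg (f x @[x --> +oo]).
Proof.
move=> nif fb; rewrite -is_cvgNE; apply/cvg_ex; eexists.
apply: nondecreasing_cvgr; first by move=> x y xy /=; rewrite lerN2 nif.
by exists (- b) => _ [x _ <-] /=; rewrite lerN2.
Qed.

Section kernel.
Context {R : realType}.
Notation mu := (@lebesgue_measure R).
Variable m : R.
Hypothesis m_gt0 : 0 < m.
Implicit Types u v z s t : R.

(* [Kint s] is K(s) = \int_{-oo}^s e^{m u} / (1 + e^u) du, written with the
   substitution v = e^{m u} as m^-1 \int_0^{e^{m s}} dv / (1 + v^{1/m}), so that
   only integrals over bounded intervals occur. *)
Definition kdens (v : R) : R := (1 + v `^ m^-1)^-1.
Definition kprim (z : R) : R := parameterized_integral mu 0 z kdens.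
Definition Kint (s : R) : R := m^-1 * kprim (expR (m * s)).

Lemma kdens_gt0 v : 0 < kdens v.
Proof. by rewrite invr_gt0 ltr_wpDr// powR_ge0. Qed.

Lemma kdens_ge_half v : 0 < v <= 1 -> 2^-1 <= kdens v.
Proof.
move=> v01; rewrite lef_pV2 ?posrE ?ltr0n ?ltr_wpDr ?powR_ge0// lerD2l.
by rewrite -(powRr0 v); apply: ger_powR; rewrite // invr_ge0 ltW.
Qed.

Lemma kdens_continuous v : 0 < v -> {for v, continuous kdens}.
Proof.
move=> v_gt0; apply: continuousV; first by rewrite gt_eqF// ltr_wpDr// powR_ge0.
by apply: continuousD; [exact: cvg_cst | exact: powR_continuous].
Qed.

Lemma kdens_continuous_itvcc u : 0 < u -> {within `[0, u], continuous kdens}.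
Proof.
move=> u_gt0; apply/continuous_within_itvP => //; split.
- by move=> x; rewrite in_itv/= => /andP[x_gt0 _]; exact: kdens_continuous.
- rewrite /kdens powR0 ?invr_eq0 ?gt_eqF//.
  apply: cvgV; first by rewrite addr0 oner_neq0.
  by apply: cvgD; [exact: cvg_cst | apply: powR_cvg0; rewrite invr_gt0].
- by apply: cvg_at_left_filter; exact: kdens_continuous.
Qed.

Lemma kdens_integrable u : 0 < u -> mu.-integrable `[0, u] (EFin \o kdens).
Proof.
move=> u_gt0; apply: continuous_compact_integrable; first exact: segment_compact.
exact: kdens_continuous_itvcc.
Qed.

Lemma kprim0 : kprim 0 = 0.
Proof. by rewrite /kprim /parameterized_integral set_itv1 Rintegral_set1. Qed.

Lemma is_derive_kprim z : 0 < z -> is_derive z 1 kprim (kdens z).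
Proof.
move=> z_gt0; have z_lt_z1 : z < z + 1 by rewrite ltrDl.
have [dz <-] := continuous_FTC1_closed z_lt_z1 (kdens_integrable (lt_trans z_gt0 z_lt_z1))
  z_gt0 (kdens_continuous z_gt0).
by rewrite derive1E; apply: derivableP.
Qed.

Lemma kprim_continuous_itvcc z : 0 <= z -> {within `[0, z], continuous kprim}.
Proof.
rewrite le_eqVlt => /predU1P[<-|z_gt0].
  by rewrite set_itv1; exact: continuous_subspace1.
exact: parameterized_integral_continuous (ltW z_gt0) (kdens_integrable z_gt0).
Qed.

Lemma kprim_cvg0 : kprim z @[z --> (0 : R)^'+] --> 0.
Proof.
have /(continuous_within_itvP _ ltr01) [_ + _] := kprim_continuous_itvcc ler01.
by rewrite kprim0.
Qed.

Lemma kprim_MVT z : 0 < z -> exists2 c, 0 < c < z & kprim z = kdens c * z.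
Proof.
move=> z_gt0; have dkprim x : x \in `]0, z[ -> is_derive x 1 kprim (kdens x).
  by rewrite in_itv/= => /andP[x_gt0 _]; exact: is_derive_kprim.
have [c cz] := MVT z_gt0 dkprim (kprim_continuous_itvcc (ltW z_gt0)).
by rewrite kprim0 !subr0 => ->; exists c; first by move: cz; rewrite in_itv.
Qed.

Lemma kprim_gt0 z : 0 < z -> 0 < kprim z.
Proof. by move=> z_gt0; have [c _ ->] := kprim_MVT z_gt0; rewrite mulr_gt0// kdens_gt0. Qed.

Lemma kprim1_ge_half : 2^-1 <= kprim 1.
Proof.
have [c /andP[c_gt0 c_lt1] ->] := kprim_MVT ltr01.
by rewrite mulr1 kdens_ge_half// c_gt0 ltW.
Qed.

Lemma is_derive_Kint s : is_derive s 1 Kint (expR (m * s) / (1 + expR s)).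
Proof.
have := is_deriveZ m^-1 (@is_derive1_comp _ kprim _ s _ _
  (is_derive_kprim (expR_gt0 (m * s))) (is_derive_expRM m s)).
move/is_derive_eq; apply; rewrite /kdens -expRM mulrAC divff ?gt_eqF// mul1r.
have expR_s1_gt0 : 0 < 1 + expR s by rewrite addr_gt0// expR_gt0.
by rewrite /GRing.scale/=; field; rewrite !gt_eqF.
Qed.

Lemma Kint_gt0 s : 0 < Kint s.
Proof. by rewrite mulr_gt0 ?invr_gt0// kprim_gt0// expR_gt0. Qed.

Lemma Kint_nondecreasing : {homo Kint : s t / s <= t}.
Proof.
move=> s t st; rewrite -subr_ge0.
have dK x : derivable Kint x 1 by case: (is_derive_Kint x).
have [c _ ->] := MVT_segment st (fun x _ => is_derive_Kint x)
  (derivable_within_continuous (fun x _ => dK x)).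
by rewrite mulr_ge0 ?subr_ge0 ?divr_ge0 ?addr_ge0 ?expR_ge0.
Qed.

Lemma Kint_ge_half t : m <= 1 -> 0 <= t -> 2^-1 <= Kint t.
Proof.
move=> m_le1 t_ge0; apply: le_trans (Kint_nondecreasing t_ge0).
rewrite /Kint mulr0 expR0; apply: le_trans kprim1_ge_half _.
by rewrite ler_peMl ?invf_ge1// (le_trans _ kprim1_ge_half).
Qed.

End kernel.

Section normalization.
Context {R : realType}.
Variable m : R.
Hypothesis m_gt0 : 0 < m.
Implicit Types t b : R.

Definition zeta t b : R := t + ln (1 - b) - ln (1 + expR t * b).

Lemma is_derive_zeta t b : 0 < 1 - b -> 0 < 1 + expR t * b ->
  is_derive b 1 (zeta t) (- (1 - b)^-1 - expR t / (1 + expR t * b)).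
Proof.
move=> b_lt1 tb_gt0.
have d_sub : is_derive b 1 (fun y => 1 - y) (-1).
  have := is_deriveB (is_derive_cst (1 : R) b 1) (is_derive_id b 1).
  by move/is_derive_eq; apply; rewrite sub0r.
have d_lin : is_derive b 1 (fun y => 1 + expR t * y) (expR t).
  have := is_deriveD (is_derive_cst (1 : R) b 1) (is_deriveZ (expR t) (is_derive_id b 1)).
  by move/is_derive_eq; apply; rewrite add0r /GRing.scale/= mulr1.
have d1 := @is_derive1_comp _ (@ln R) _ b _ _ (is_derive1_ln b_lt1) d_sub.
have d2 := @is_derive1_comp _ (@ln R) _ b _ _ (is_derive1_ln tb_gt0) d_lin.
have := is_deriveB (is_deriveD (is_derive_cst t b 1) d1) d2.
by move/is_derive_eq; apply; rewrite add0r mulrN1 mulrC.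
Qed.

Lemma expR_zeta t b : 0 < 1 - b -> 0 < 1 + expR t * b ->
  expR (m * zeta t b) = expR (m * t) * (1 - b) `^ m * (1 + expR t * b) `^ (- m).
Proof.
move=> b_lt1 tb_gt0; rewrite /zeta /powR !gt_eqF// !mulrDr !mulrN !expRD !expRN.
by rewrite mulNr expRN.
Qed.

Lemma is_derive_Wraw_primitive t b : 0 < 1 - b -> 0 < 1 + expR t * b ->
  is_derive b 1 (fun y => - expR (- (m * t)) * Kint m (zeta t y)) (Wraw m t b).
Proof.
move=> b_lt1 tb_gt0.
have := is_deriveZ (- expR (- (m * t))) (@is_derive1_comp _ (Kint m) (zeta t) b _ _
  (is_derive_Kint m_gt0 (zeta t b)) (is_derive_zeta b_lt1 tb_gt0)).
move/is_derive_eq; apply; rewrite /GRing.scale/= /Wraw /zeta /powR !gt_eqF//.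
set a := 1 - b in b_lt1 *; set c := 1 + expR t * b in tb_gt0 *.
have ea : expR (ln a) = a by rewrite lnK.
have ec : expR (ln c) = c by rewrite lnK.
rewrite !mulrDr !mulrN !expRD !expRN mulrBl mul1r [- m * _]mulNr expRD !expRN ea ec.
have cta_gt0 : 0 < c + expR t * a by rewrite addr_gt0// mulr_gt0// expR_gt0.
by field; rewrite !gt_eqF ?expR_gt0.
Qed.

Lemma Kint_zeta_cvg t : Kint m (zeta t b) @[b --> 1^'-] --> 0.
Proof.
apply/cvg_at_leftP => u [u_lt1 u_cvg].
have den_cvg : 1 + expR t * u n @[n --> \oo] --> 1 + expR t.
  by apply: cvgD; [exact: cvg_cst | rewrite -[X in _ --> X]mulr1; exact: cvgMl_tmp].
have den_gt0 : \forall n \near \oo, 0 < 1 + expR t * u n.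
  by apply: cvgr_gt den_cvg _ _; rewrite addr_gt0// expR_gt0.
have num_cvg : (1 - u n) `^ m @[n --> \oo] --> 0.
  move/cvg_at_rightP : (powR_cvg0 m_gt0); apply; split => [n|].
    by rewrite subr_gt0.
  by rewrite -(subrr 1); apply: cvgB => //; exact: cvg_cst.
have e_cvg : expR (m * zeta t (u n)) @[n --> \oo] --> 0.
  apply: cvg_trans (_ : expR (m * t) * (1 - u n) `^ m * (1 + expR t * u n) `^ (- m)
    @[n --> \oo] --> 0).
    by apply: near_eq_cvg; near=> n; rewrite expR_zeta ?subr_gt0//; near: n.
  rewrite -(mul0r ((1 + expR t) `^ (- m))) -(mulr0 (expR (m * t))).
  apply: cvgM; first exact: cvgMl_tmp.
  apply: (@continuous_cvg _ _ _ _ _ _ (fun y => y `^ (- m))) den_cvg.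
  by apply: powR_continuous; rewrite addr_gt0// expR_gt0.
rewrite /Kint -(mulr0 m^-1); apply: cvgMl_tmp.
by move/cvg_at_rightP : (kprim_cvg0 m_gt0); apply; split => // n; exact: expR_gt0.
Unshelve. all: by end_near. Qed.

Lemma Wmass_eq t : Wmass m t = expR (- (m * t)) * Kint m t.
Proof.
have b_pos b : 0 <= b < 1 -> 0 < 1 - b /\ 0 < 1 + expR t * b.
  by move=> /andP[b_ge0 b_lt1]; rewrite subr_gt0 ltr_pwDl// mulr_ge0 ?expR_ge0.
have prim_cvg : - expR (- (m * t)) * Kint m (zeta t b) @[b --> 1^'-] --> 0.
  by rewrite -(mulr0 (- expR (- (m * t)))); exact: cvgMl_tmp (Kint_zeta_cvg t).
rewrite /Wmass (ge0_continuous_FTC2_itvco ltr01 _ _ _ prim_cvg) /=.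
- by rewrite /zeta subr0 mulr0 addr0 ln1 subr0 addr0 sub0r mulNr opprK.
- by move=> b _; rewrite /Wraw mulr_ge0 ?powR_ge0.
- move=> b /b_pos[b_lt1 tb_gt0]; apply: continuousM.
  + apply: (@continuous_comp_powR _ (fun y => 1 - y)) => //.
    by apply: continuousB; [exact: cvg_cst | exact: cvg_id].
  + apply: (@continuous_comp_powR _ (fun y => 1 + expR t * y)) => //.
    apply: continuousD; first exact: cvg_cst.
    by apply: continuousM; [exact: cvg_cst | exact: cvg_id].
- by move=> b /b_pos[b_lt1 tb_gt0]; exact: is_derive_Wraw_primitive.
Qed.

Lemma CnormE : Cnorm m = fun t => expR (m * t) / Kint m t.
Proof. by apply/funext => t; rewrite /Cnorm Wmass_eq invfM expRN invrK. Qed.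

Lemma csmallE : csmall m = fun t => (Kint m t)^-1.
Proof.
by apply/funext => t; rewrite /csmall CnormE mulrA -expRD addNr expR0 mul1r.
Qed.

Lemma Cnorm_delta t : Cnorm m t * delta m t = - expR (m * t) / ((1 + expR t) * Kint m t).
Proof.
have K_gt0 : 0 < Kint m t := Kint_gt0 m_gt0 t.
have dC := is_deriveM (is_derive_expRM m t)
  (is_deriveV (lt0r_neq0 K_gt0) (is_derive_Kint m_gt0 t)).
rewrite /delta derive1E CnormE; case: dC => _ ->; rewrite /GRing.scale/=.
have expR_t1_gt0 : 0 < 1 + expR t by rewrite addr_gt0// expR_gt0.
by field; rewrite !gt_eqF ?expR_gt0.
Qed.

Lemma Cnorm_delta_bounds t c : m <= 1 -> 0 <= t -> 0 <= c <= csmall m t ->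
  - 4 * expR (- ((1 - m) * t)) <= Cnorm m t * delta m t /\
  Cnorm m t * delta m t <= - (c / (1 + expR (- t))) * expR (- ((1 - m) * t)) /\
  - (c / (1 + expR (- t))) * expR (- ((1 - m) * t)) <= 0.
Proof.
move=> m_le1 t_ge0; rewrite csmallE => /andP[c_ge0 c_le].
have K_ge := Kint_ge_half m_gt0 m_le1 t_ge0.
have K_gt0 : 0 < Kint m t := Kint_gt0 m_gt0 t.
have X_ge1 : 1 <= expR t by rewrite -expR0 ler_expR.
have X_gt0 : 0 < expR t := expR_gt0 t.
have X1_gt0 : 0 < 1 + expR t by rewrite addr_gt0.
pose e := expR (m * t) / expR t; pose q := expR t / (1 + expR t).
have e_gt0 : 0 < e by rewrite divr_gt0// expR_gt0.
have q01 : 0 <= q <= 1.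
  by rewrite /q divr_ge0 ?expR_ge0 ?addr_ge0//= ler_pdivrMr// mul1r lerDr.
have k02 : 0 <= (Kint m t)^-1 <= 2.
  by rewrite invr_ge0 ltW//= -[2]invrK lef_pV2 ?posrE ?invr_gt0.
rewrite Cnorm_delta expRN mulrBl mul1r opprB expRD expRN.
have -> : - expR (m * t) / ((1 + expR t) * Kint m t) = - (e * (q * (Kint m t)^-1)).
  by rewrite /e /q; field; rewrite !gt_eqF.
have -> : - (c / (1 + (expR t)^-1)) * (expR (m * t) * (expR t)^-1) = - (e * (q * c)).
  by rewrite /e /q; field; rewrite !gt_eqF.
rewrite -/e; move: q01 k02 c_le; set k := (Kint m t)^-1; clearbody e q k.
move=> /andP[q_ge0 q_le1] /andP[k_ge0 k_le2] c_le; split; [|split].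
- by rewrite mulNr lerN2 [4 * e]mulrC ler_pM2l//; nra.
- by rewrite lerN2 ler_pM2l// ler_wpM2l.
- by rewrite oppr_le0 !mulr_ge0// ltW.
Qed.

End normalization.

Theorem lemma6 (R : realType) (mu : R) (hmu0 : 0 < mu) (hmu1 : mu < 1) :
  cvg (csmall mu x @[x --> +oo]) /\
  let cinf := lim (csmall mu x @[x --> +oo]) in
  forall tau : R, 0 <= tau ->
    - 4 * expR (- ((1 - mu) * tau)) <= Cnorm mu tau * delta mu tau /\
    Cnorm mu tau * delta mu tau
      <= - (cinf / (1 + expR (- tau))) * expR (- ((1 - mu) * tau)) /\
    - (cinf / (1 + expR (- tau))) * expR (- ((1 - mu) * tau)) <= 0.
Proof.
have c_noninc : nonincreasing_fun (csmall mu).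
  move=> s t st; rewrite csmallE// lef_pV2 ?posrE ?Kint_gt0//.
  exact: Kint_nondecreasing.
have c_ge0 t : 0 <= csmall mu t by rewrite csmallE// invr_ge0 ltW// Kint_gt0.
have c_cvg := nonincreasing_is_cvgr c_noninc c_ge0.
split=> // cinf t t_ge0.
apply: Cnorm_delta_bounds => //; first exact: ltW.
apply/andP; split; first by apply: limr_ge => //; exact: nearW.
apply: limr_le => //; near=> s; apply: c_noninc.
by near: s; apply: nbhs_pinfty_ge; rewrite num_real.
Unshelve. all: by end_near. Qed.
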